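(* Let $|\psi\rangle\in\mathcal H_A\otimes\mathcal H_{A'}\otimes\mathcal H_B\otimes\mathcal H_{B'}$ be an embedding of a primitive $P_{X,Y}$. Then $$\Delta_\psi(P_{X,Y})=S(X;BB')-I(X;Y)=S(AA';Y)-I(X;Y).$$
   Context: A primitive is a joint distribution $P_{X,Y}$ on finite sets $\mathcal X\times\mathcal Y$. $\mathcal H_A,\mathcal H_B$ have computational orthonormal bases indexed by $\mathcal X$ and $\mathcal Y$; $\mathcal H_{A'},\mathcal H_{B'}$ are finite-dimensional (possibly trivial) work spaces of Alice and Bob. For a pure state $|\psi\rangle$ on $AA'BB'$, $X$ (resp. $Y$) denotes the outcome of measuring $A$ (resp. $B$) in the computational basis; entropic quantities are evaluated on the state obtained from $|\psi\rangle\langle\psi|$ by measuring exactly the registers named by $X$ or $Y$ and tracing out registers not mentioned (e.g. $S(X;BB')$: measure $A$, trace out $A'$, keep $BB'$ quantum; $S(AA';Y)$: measure $B$, trace out $B'$, keep $AA'$; $S(X;YB')$: measure $A,B$, trace out $A'$). Here $S(P;Q)=S(P)+S(Q)-S(PQ)$ with $S$ the von Neumann entropy, and $I(X;Y)$ is Shannon mutual information. $|\psi\rangle$ is an embedding of $P_{X,Y}$ if measuring $A$ and $B$ in the computational basis yields $(X,Y)$ distributed as $P_{X,Y}$ and $S(X;YB')=S(XA';Y)=I(X;Y)$. Its leakage is $\Delta_\psi(P_{X,Y}):=\max\{S(X;BB')-I(X;Y),\,S(AA';Y)-I(X;Y)\}$. *)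

From mathcomp Require Import all_boot all_order all_algebra.
From mathcomp Require Import complex.
From mathcomp Require Import reals exp.
Set Implicit Arguments. Unset Strict Implicit. Unset Printing Implicit Defensive.
Import Order.TTheory GRing.Theory Num.Theory.
Local Open Scope ring_scope.

(* eta(t) = - t ln t  (with the convention 0 ln 0 = 0; ln t = 0 for t <= 0) *)
Definition eta_fun (R : realType) (t : R) : R := - (t * ln t).

(* An operator on the Hilbert space with orthonormal basis indexed by the
   finite type K, given by its matrix entries, turned into a square matrix. *)
Definition mx_of (R : realType) (K : finType) (f : K -> K -> R[i]) : 'M[R[i]]_#|K| :=
  \matrix_(i, j) f (enum_val i) (enum_val j).

Definition spectrum (R : realType) (n : nat) (M : 'M[R[i]]_n) : seq R[i] :=
  sval (closed_field_poly_normal (char_poly M)).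

Definition vN_entropy (R : realType) (K : finType) (rho : K -> K -> R[i]) : R :=
  \sum_(z <- spectrum (mx_of rho)) eta_fun (@complex.Re R z).

Definition ptrace2 (R : realType) (L M : finType) (rho : L * M -> L * M -> R[i])
  : L -> L -> R[i] := fun l l' => \sum_(m : M) rho (l, m) (l', m).
Definition ptrace1 (R : realType) (L M : finType) (rho : L * M -> L * M -> R[i])
  : M -> M -> R[i] := fun m m' => \sum_(l : L) rho (l, m) (l, m').

Definition qmutinf (R : realType) (L M : finType) (rho : L * M -> L * M -> R[i]) : R :=
  vN_entropy (ptrace2 rho) + vN_entropy (ptrace1 rho) - vN_entropy rho.

(* The pure state |psi> on A A' B B' is given by its amplitudes
   psi x a y b = <x,a,y,b|psi>, with x : X (basis of A), a : A' , y : Y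
   (basis of B), b : B'.  The following are the (classical-)quantum states
   obtained from |psi><psi| by measuring the named computational registers
   and tracing out the unnamed ones. *)

(* S(X;BB'): measure A, trace out A', keep B B' quantum.  State on X (x) (B B'). *)
Definition rho_X_BB' (R : realType) (X A' Y B' : finType)
  (psi : X -> A' -> Y -> B' -> R[i]) : X * (Y * B') -> X * (Y * B') -> R[i] :=
  fun u v => ((u.1 == v.1)%:R : R[i]) *
    \sum_(a : A') psi u.1 a u.2.1 u.2.2 * (psi v.1 a v.2.1 v.2.2)^*.

(* S(AA';Y): measure B, trace out B', keep A A' quantum.  State on (A A') (x) Y. *)
Definition rho_AA'_Y (R : realType) (X A' Y B' : finType)
  (psi : X -> A' -> Y -> B' -> R[i]) : (X * A') * Y -> (X * A') * Y -> R[i] :=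
  fun u v => ((u.2 == v.2)%:R : R[i]) *
    \sum_(b : B') psi u.1.1 u.1.2 u.2 b * (psi v.1.1 v.1.2 v.2 b)^*.

(* S(X;YB'): measure A and B, trace out A'.  State on X (x) (Y B'). *)
Definition rho_X_YB' (R : realType) (X A' Y B' : finType)
  (psi : X -> A' -> Y -> B' -> R[i]) : X * (Y * B') -> X * (Y * B') -> R[i] :=
  fun u v => ((u.1 == v.1)%:R : R[i]) * ((u.2.1 == v.2.1)%:R : R[i]) *
    \sum_(a : A') psi u.1 a u.2.1 u.2.2 * (psi v.1 a v.2.1 v.2.2)^*.

(* S(XA';Y): measure A and B, trace out B'.  State on (X A') (x) Y. *)
Definition rho_XA'_Y (R : realType) (X A' Y B' : finType)
  (psi : X -> A' -> Y -> B' -> R[i]) : (X * A') * Y -> (X * A') * Y -> R[i] :=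
  fun u v => ((u.1.1 == v.1.1)%:R : R[i]) * ((u.2 == v.2)%:R : R[i]) *
    \sum_(b : B') psi u.1.1 u.1.2 u.2 b * (psi v.1.1 v.1.2 v.2 b)^*.

Definition is_distr (R : realType) (X Y : finType) (P : X * Y -> R) : Prop :=
  (forall xy, 0 <= P xy) /\ \sum_(xy : X * Y) P xy = 1.

Definition shannon (R : realType) (T : finType) (p : T -> R) : R :=
  \sum_(t : T) eta_fun (p t).
Definition mutinf (R : realType) (X Y : finType) (P : X * Y -> R) : R :=
  shannon (fun x : X => \sum_(y : Y) P (x, y))
  + shannon (fun y : Y => \sum_(x : X) P (x, y))
  - shannon P.

Definition is_embedding (R : realType) (X A' Y B' : finType)
  (P : X * Y -> R) (psi : X -> A' -> Y -> B' -> R[i]) : Prop :=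
  (forall (x : X) (y : Y),
      real_complex R (P (x, y)) = \sum_(a : A') \sum_(b : B') psi x a y b * (psi x a y b)^*)
  /\ qmutinf (rho_X_YB' psi) = mutinf P
  /\ qmutinf (rho_XA'_Y psi) = mutinf P.

Definition leakage (R : realType) (X A' Y B' : finType)
  (P : X * Y -> R) (psi : X -> A' -> Y -> B' -> R[i]) : R :=
  Num.max (qmutinf (rho_X_BB' psi) - mutinf P) (qmutinf (rho_AA'_Y psi) - mutinf P).

From mathcomp Require Import all_boot all_order all_algebra.
From mathcomp Require Import fingroup perm.
From mathcomp Require Import complex.
From mathcomp Require Import reals exp.
From mathcomp Require Import lra.
Set Implicit Arguments. Unset Strict Implicit. Unset Printing Implicit Defensive.
Import Order.TTheory GRing.Theory Num.Theory.
Local Open Scope ring_scope.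

(* Every mutual information in the statement splits into Shannon entropies of
   the marginals of X and Y and von Neumann entropies of conditional states,
   because measured registers make the state block diagonal.  For a pure state
   the two reduced states T T^* and T^* T have the same nonzero spectrum, so
   S(AA') = S(BB') and each conditional state on A' has the same entropy as the
   complementary one on B'.  After these identifications
   S(X;BB') - S(AA';Y) = S(X;YB') - S(XA';Y), and for an embedding the right
   hand side vanishes. *)

Lemma det_perm_conj (T : comNzRingType) n (s : 'S_n) (A : 'M[T]_n) :
  \det (\matrix_(i, j) A (s i) (s j)) = \det A.
Proof.
have -> : \matrix_(i, j) A (s i) (s j) = row_perm s (col_perm s A).
  by apply/matrixP => i j; rewrite !mxE.
rewrite row_permE col_permE !det_mulmx !det_perm odd_permV.
by rewrite mulrCA -expr2 sqrr_sign mulr1.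
Qed.

Section CharPoly.
Variable T : comNzRingType.

Lemma char_poly_perm_conj n (s : 'S_n) (A : 'M[T]_n) :
  char_poly (\matrix_(i, j) A (s i) (s j)) = char_poly A.
Proof.
rewrite /char_poly -(det_perm_conj s (char_poly_mx A)); congr (\det _).
by apply/matrixP => i j; rewrite !mxE (inj_eq perm_inj).
Qed.

Lemma char_poly_block_diag m n (A : 'M[T]_m) (B : 'M[T]_n) :
  char_poly (block_mx A 0 0 B) = char_poly A * char_poly B.
Proof.
rewrite /char_poly /char_poly_mx (scalar_mx_block m n) map_block_mx !map_mx0.
by rewrite opp_block_mx add_block_mx !oppr0 !addr0 det_ublock.
Qed.

Lemma char_poly_tr n (A : 'M[T]_n) : char_poly A^T = char_poly A.
Proof.
rewrite /char_poly -det_tr; congr (\det _); apply/matrixP => i j.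
by rewrite !mxE eq_sym.
Qed.

(* Compare the determinants of the two products of [[1, -A], [0, X]] and
   [[X, A], [B, 1]]. *)
Lemma char_poly_mulmxC m n (A : 'M[T]_(m, n)) (B : 'M[T]_(n, m)) :
  'X^n * char_poly (A *m B) = 'X^m * char_poly (B *m A).
Proof.
pose A' := map_mx polyC A; pose B' := map_mx polyC B.
pose M1 := block_mx (1%:M : 'M[{poly T}]_m) (- A') 0 ('X%:M : 'M_n).
pose M := block_mx ('X%:M : 'M[{poly T}]_m) A' B' (1%:M : 'M_n).
have M1M : M1 *m M = block_mx ('X%:M - A' *m B') 0 ('X *: B') ('X%:M).
  rewrite /M1 /M mulmx_block !mul1mx mulNmx !mul0mx !add0r mulmx1 addrN.
  by rewrite mul_scalar_mx mulmx1.
have MM1 : M *m M1 = block_mx ('X%:M) 0 B' ('X%:M - B' *m A').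
  rewrite /M1 /M mulmx_block !mulmx1 !mulmx0 !addr0 !mulmxN mul_scalar_mx scale1r.
  by rewrite mul_scalar_mx mul_mx_scalar addNr addrC.
have : \det (M1 *m M) = \det (M *m M1) by rewrite !det_mulmx mulrC.
rewrite M1M MM1 !det_lblock !det_scalar /char_poly /char_poly_mx !map_mxM.
by rewrite mulrC.
Qed.

End CharPoly.

Section Entropy.
Variable R : realType.
Local Notation C := R[i].

Definition poly_roots (p : {poly C}) : seq C := sval (closed_field_poly_normal p).

Definition poly_entropy (p : {poly C}) : R :=
  \sum_(z <- poly_roots p) eta_fun (complex.Re z).

Definition op_char_poly (K : finType) (f : K -> K -> C) := char_poly (mx_of f).

Lemma vN_entropyE (K : finType) (rho : K -> K -> C) :
  vN_entropy rho = poly_entropy (op_char_poly rho).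
Proof. by []. Qed.

Lemma monic_prod_poly_roots p :
  p \is monic -> p = \prod_(z <- poly_roots p) ('X - z%:P).
Proof.
move=> mp; rewrite /poly_roots; case: (closed_field_poly_normal p) => r /= {1}->.
by rewrite (monicP mp) scale1r.
Qed.

Lemma poly_entropy_prod_XsubC s :
  poly_entropy (\prod_(z <- s) ('X - z%:P)) = \sum_(z <- s) eta_fun (complex.Re z).
Proof.
rewrite /poly_entropy; apply: perm_big; apply: prod_XsubC_eq.
by rewrite -monic_prod_poly_roots // monic_prod_XsubC.
Qed.

Lemma poly_entropyM p q : p \is monic -> q \is monic ->
  poly_entropy (p * q) = poly_entropy p + poly_entropy q.
Proof.
move=> mp mq; rewrite (monic_prod_poly_roots mp) (monic_prod_poly_roots mq).
by rewrite -big_cat !poly_entropy_prod_XsubC big_cat.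
Qed.

Lemma poly_entropy_prod (I : finType) (F : I -> {poly C}) :
  (forall i, F i \is monic) -> poly_entropy (\prod_i F i) = \sum_i poly_entropy (F i).
Proof.
move=> mF.
suff [] : (\prod_i F i) \is monic /\ poly_entropy (\prod_i F i) = \sum_i poly_entropy (F i).
  by [].
apply: (big_ind2 (fun p e => p \is monic /\ poly_entropy p = e)) => //.
- by split; [exact: monic1 | have := poly_entropy_prod_XsubC [::]; rewrite !big_nil].
- by move=> p e q d [mp <-] [mq <-]; rewrite monicMl // poly_entropyM.
Qed.

Lemma poly_entropy_Xn_mul n p : p \is monic -> poly_entropy ('X^n * p) = poly_entropy p.
Proof.
move=> mp; rewrite poly_entropyM ?monicXn //.
have -> : 'X^n = \prod_(z <- nseq n (0 : C)) ('X - z%:P).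
  elim: n => [|n IH]; first by rewrite big_nil expr0.
  by rewrite /= big_cons exprS IH polyC0 subr0.
rewrite poly_entropy_prod_XsubC; suff -> : \sum_(z <- nseq n (0 : C)) eta_fun (complex.Re z) = 0.
  by rewrite add0r.
elim: n => [|n IH]; first by rewrite big_nil.
by rewrite /= big_cons IH addr0 /eta_fun mul0r oppr0.
Qed.

Lemma op_char_poly_ext (K : finType) (f g : K -> K -> C) :
  f =2 g -> op_char_poly f = op_char_poly g.
Proof. by move=> fg; congr char_poly; apply/matrixP => i j; rewrite !mxE fg. Qed.

Lemma op_char_poly_bij (K : finType) n (h : 'I_n -> K) (f : K -> K -> C) :
  bijective h -> char_poly (\matrix_(i, j) f (h i) (h j)) = op_char_poly f.
Proof.
move=> hb; have En : n = #|K| by rewrite -(bij_eq_card hb) card_ord.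
subst n.
have hi : injective (enum_rank \o h) by apply: inj_comp; [exact: enum_rank_inj | exact: bij_inj].
rewrite /op_char_poly -(char_poly_perm_conj (perm hi) (mx_of f)); congr char_poly.
by apply/matrixP => i j; rewrite !mxE !permE /= !enum_rankK.
Qed.

Lemma op_char_poly_reindex (K K' : finType) (e : K -> K') (f : K' -> K' -> C) :
  bijective e -> op_char_poly (fun u v => f (e u) (e v)) = op_char_poly f.
Proof.
move=> eb; apply: (op_char_poly_bij (h := fun i => e (enum_val i))).
by apply: bij_comp => //; exact: enum_val_bij.
Qed.

Lemma op_char_poly_sum (K1 K2 : finType) (f : K1 + K2 -> K1 + K2 -> C) :
  (forall a b, f (inl a) (inr b) = 0) -> (forall a b, f (inr b) (inl a) = 0) ->
  op_char_poly f = op_char_poly (fun a a' => f (inl a) (inl a'))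
                   * op_char_poly (fun b b' => f (inr b) (inr b')).
Proof.
move=> f12 f21.
pose h := fun i : 'I_(#|K1| + #|K2|) =>
  match split i with inl j => inl (enum_val j) | inr j => inr (enum_val j) end.
have hb : bijective h.
  exists (fun u => unsplit (match u with
                            | inl a => inl (enum_rank a) | inr b => inr (enum_rank b) end)).
    by move=> i; rewrite /h -{2}(splitK i); case: (split i) => j /=; rewrite enum_valK.
  by case=> [a|b]; rewrite /h unsplitK enum_rankK.
rewrite -(op_char_poly_bij f hb) -char_poly_block_diag; congr char_poly.
apply/matrixP => i j; rewrite mxE -(splitK i) -(splitK j).
case: (split i) => i'; case: (split j) => j'; rewrite /h !unsplitK /=.
- by rewrite block_mxEul mxE.
- by rewrite block_mxEur mxE f12.
- by rewrite block_mxEdl mxE f21.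
- by rewrite block_mxEdr mxE.
Qed.

Lemma op_char_poly_card0 (K : finType) (f : K -> K -> C) :
  #|K| = 0%N -> op_char_poly f = 1.
Proof.
move=> K0; have mp := char_poly_monic (mx_of f).
have sp : size (op_char_poly f) = 1%N by rewrite size_char_poly K0.
have lc : lead_coef (op_char_poly f) = (op_char_poly f)`_0 by rewrite lead_coefE sp.
by rewrite (size1_polyC (eq_leq sp)) -lc (monicP mp).
Qed.

Lemma op_char_poly_block_ord n (K : finType) (f : 'I_n -> K -> K -> C) :
  op_char_poly (fun u v : 'I_n * K => (u.1 == v.1)%:R * f u.1 u.2 v.2)
  = \prod_i op_char_poly (f i).
Proof.
elim: n f => [|n IH] f.
  by rewrite big_ord0 op_char_poly_card0 // card_prod card_ord mul0n.
pose e := fun u : K + ('I_n * K) =>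
  match u with inl k => (ord0, k) | inr p => (lift ord0 p.1, p.2) end.
have eb : bijective e.
  exists (fun p : 'I_n.+1 * K =>
            match unlift ord0 p.1 with Some j => inr (j, p.2) | None => inl p.2 end).
    by case=> [k|[j k]]; rewrite /e /= ?unlift_none ?liftK.
  by case=> i k /=; case: unliftP => [j|] ->.
rewrite -(op_char_poly_reindex _ eb) op_char_poly_sum; first last.
- by move=> a [j k]; rewrite /e /= mul0r.
- by move=> a [j k]; rewrite /e /= mul0r.
rewrite big_ord_recl -IH; congr (_ * _).
by apply: op_char_poly_ext => a a'; rewrite /e /= mul1r.
Qed.

Lemma op_char_poly_block (L K : finType) (f : L -> K -> K -> C) :
  op_char_poly (fun u v : L * K => (u.1 == v.1)%:R * f u.1 u.2 v.2)
  = \prod_l op_char_poly (f l).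
Proof.
pose e := fun p : 'I_#|L| * K => (enum_val p.1, p.2).
have eb : bijective e.
  exists (fun p : L * K => (enum_rank p.1, p.2)).
    by case=> i k; rewrite /e /= enum_valK.
  by case=> l k; rewrite /e /= enum_rankK.
rewrite -(op_char_poly_reindex _ eb) (reindex (fun i : 'I_#|L| => enum_val i)); last first.
  by apply: onW_bij; exact: enum_val_bij.
rewrite -(op_char_poly_block_ord (fun i => f (enum_val i))).
by apply: op_char_poly_ext => -[i k] [j k']; rewrite /e /= (inj_eq enum_val_inj).
Qed.

Lemma op_char_poly_diag (L : finType) (d : L -> C) :
  op_char_poly (fun u v : L => (u == v)%:R * d u) = \prod_l ('X - (d l)%:P).
Proof.
rewrite /op_char_poly char_poly_trig; last first.
  apply/is_trig_mxP => i j lt_ij; rewrite mxE (inj_eq enum_val_inj).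
  by rewrite -val_eqE /= ltn_eqF // mul0r.
rewrite (reindex (fun i : 'I_#|L| => enum_val i)); last first.
  by apply: onW_bij; exact: enum_val_bij.
by apply: eq_bigr => i _; rewrite mxE eqxx mul1r.
Qed.

Lemma vN_entropy_ext (K : finType) (f g : K -> K -> C) :
  f =2 g -> vN_entropy f = vN_entropy g.
Proof. by move=> fg; rewrite !vN_entropyE (op_char_poly_ext fg). Qed.

Lemma vN_entropy_block (L K : finType) (f : L -> K -> K -> C) :
  vN_entropy (fun u v : L * K => (u.1 == v.1)%:R * f u.1 u.2 v.2)
  = \sum_l vN_entropy (f l).
Proof.
by rewrite vN_entropyE op_char_poly_block poly_entropy_prod // => l; exact: char_poly_monic.
Qed.

Lemma vN_entropy_block_r (K L : finType) (f : L -> K -> K -> C) :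
  vN_entropy (fun u v : K * L => (u.2 == v.2)%:R * f u.2 u.1 v.1)
  = \sum_l vN_entropy (f l).
Proof.
have swapK : bijective (fun p : K * L => (p.2, p.1)).
  by exists (fun p : L * K => (p.2, p.1)); case.
by rewrite -vN_entropy_block !vN_entropyE -(op_char_poly_reindex _ swapK).
Qed.

Lemma vN_entropy_diag (L : finType) (d : L -> C) :
  vN_entropy (fun u v : L => (u == v)%:R * d u) = \sum_l eta_fun (complex.Re (d l)).
Proof.
rewrite vN_entropyE op_char_poly_diag poly_entropy_prod => [|l]; last exact: monicXsubC.
by apply: eq_bigr => l _; have := poly_entropy_prod_XsubC [:: d l]; rewrite !big_seq1.
Qed.

Lemma vN_entropy_pure_marginals (K M : finType) (T : K -> M -> C) :
  vN_entropy (fun k k' => \sum_m T k m * (T k' m)^*)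
  = vN_entropy (fun m m' => \sum_k T k m * (T k m')^*).
Proof.
pose Tm := \matrix_(i < #|K|, j < #|M|) T (enum_val i) (enum_val j).
pose Sm := \matrix_(i < #|M|, j < #|K|) (T (enum_val j) (enum_val i))^*.
have TS : mx_of (fun k k' => \sum_m T k m * (T k' m)^*) = Tm *m Sm.
  apply/matrixP => i i'; rewrite !mxE (reindex (fun j : 'I_#|M| => enum_val j)) /=.
    by apply: eq_bigr => j _; rewrite !mxE.
  by apply: onW_bij; exact: enum_val_bij.
have ST : mx_of (fun m m' => \sum_k T k m * (T k m')^*) = (Sm *m Tm)^T.
  apply/matrixP => i i'; rewrite !mxE (reindex (fun j : 'I_#|K| => enum_val j)) /=.
    by apply: eq_bigr => j _; rewrite !mxE mulrC.
  by apply: onW_bij; exact: enum_val_bij.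
rewrite !vN_entropyE -(poly_entropy_Xn_mul #|M|) ?char_poly_monic //.
rewrite -(poly_entropy_Xn_mul #|K| (char_poly_monic _)).
by rewrite /op_char_poly TS ST char_poly_tr char_poly_mulmxC.
Qed.

Lemma qmutinf_ext (L K : finType) (f g : L * K -> L * K -> C) :
  f =2 g -> qmutinf f = qmutinf g.
Proof.
move=> fg.
have e2 : vN_entropy (ptrace2 f) = vN_entropy (ptrace2 g).
  by apply: vN_entropy_ext => l l'; apply: eq_bigr => k _.
have e1 : vN_entropy (ptrace1 f) = vN_entropy (ptrace1 g).
  by apply: vN_entropy_ext => k k'; apply: eq_bigr => l _.
by rewrite /qmutinf e2 e1 (vN_entropy_ext fg).
Qed.

Lemma qmutinf_block (L K : finType) (f : L -> K -> K -> C) :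
  qmutinf (fun u v : L * K => (u.1 == v.1)%:R * f u.1 u.2 v.2)
  = \sum_l eta_fun (complex.Re (\sum_k f l k k))
    + vN_entropy (fun k k' => \sum_l f l k k') - \sum_l vN_entropy (f l).
Proof.
set rho := fun u v : L * K => _.
have SL : vN_entropy (ptrace2 rho) = \sum_l eta_fun (complex.Re (\sum_k f l k k)).
  by rewrite -vN_entropy_diag; apply: vN_entropy_ext => l l'; rewrite /ptrace2 mulr_sumr.
have SK : vN_entropy (ptrace1 rho) = vN_entropy (fun k k' => \sum_l f l k k').
  by apply: vN_entropy_ext => k k'; apply: eq_bigr => l _; rewrite /rho /= eqxx mul1r.
by rewrite /qmutinf SL SK /rho vN_entropy_block.
Qed.

Lemma qmutinf_block_r (K L : finType) (f : L -> K -> K -> C) :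
  qmutinf (fun u v : K * L => (u.2 == v.2)%:R * f u.2 u.1 v.1)
  = vN_entropy (fun k k' => \sum_l f l k k')
    + \sum_l eta_fun (complex.Re (\sum_k f l k k)) - \sum_l vN_entropy (f l).
Proof.
set rho := fun u v : K * L => _.
have SK : vN_entropy (ptrace2 rho) = vN_entropy (fun k k' => \sum_l f l k k').
  by apply: vN_entropy_ext => k k'; apply: eq_bigr => l _; rewrite /rho /= eqxx mul1r.
have SL : vN_entropy (ptrace1 rho) = \sum_l eta_fun (complex.Re (\sum_k f l k k)).
  by rewrite -vN_entropy_diag; apply: vN_entropy_ext => l l'; rewrite /ptrace1 mulr_sumr.
by rewrite /qmutinf SK SL /rho vN_entropy_block_r.
Qed.

End Entropy.

Section Embedding.
Variables (R : realType) (X A' Y B' : finType) (psi : X -> A' -> Y -> B' -> R[i]).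

Let H_X := \sum_x eta_fun (complex.Re
  (\sum_(m : Y * B') \sum_(a : A') psi x a m.1 m.2 * (psi x a m.1 m.2)^*)).
Let H_Y := \sum_y eta_fun (complex.Re
  (\sum_(k : X * A') \sum_(b : B') psi k.1 k.2 y b * (psi k.1 k.2 y b)^*)).
Let S_AA' := vN_entropy (fun k k' : X * A' =>
  \sum_(m : Y * B') psi k.1 k.2 m.1 m.2 * (psi k'.1 k'.2 m.1 m.2)^*).
Let S_BB' := vN_entropy (fun m m' : Y * B' =>
  \sum_(k : X * A') psi k.1 k.2 m.1 m.2 * (psi k.1 k.2 m'.1 m'.2)^*).
Let S_A'_X := \sum_x vN_entropy (fun a a' : A' =>
  \sum_(m : Y * B') psi x a m.1 m.2 * (psi x a' m.1 m.2)^*).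
Let S_B'_Y := \sum_y vN_entropy (fun b b' : B' =>
  \sum_(k : X * A') psi k.1 k.2 y b * (psi k.1 k.2 y b')^*).
Let S_A'_XY := \sum_x \sum_y vN_entropy (fun a a' : A' =>
  \sum_(b : B') psi x a y b * (psi x a' y b)^*).

Lemma pure_state_marginals : S_AA' = S_BB'.
Proof. exact: (vN_entropy_pure_marginals (fun k m => psi k.1 k.2 m.1 m.2)). Qed.

Lemma qmutinf_X_BB' : qmutinf (rho_X_BB' psi) = H_X + S_BB' - S_A'_X.
Proof.
pose f x (m m' : Y * B') := \sum_a psi x a m.1 m.2 * (psi x a m'.1 m'.2)^*.
rewrite (@qmutinf_ext _ _ _ _ (fun u v => (u.1 == v.1)%:R * f u.1 u.2 v.2)); last first.
  move=> -[x m] [x' m']; rewrite /rho_X_BB' /f /=.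
  by have [<-|_] := eqVneq x x'; rewrite ?mul0r.
rewrite qmutinf_block.
have -> : vN_entropy (fun m m' => \sum_x f x m m') = S_BB'.
  by apply: vN_entropy_ext => m m'; rewrite /f pair_bigA.
have -> : \sum_x vN_entropy (f x) = S_A'_X.
  apply: eq_bigr => x _; symmetry.
  exact: (vN_entropy_pure_marginals (fun a (m : Y * B') => psi x a m.1 m.2)).
by [].
Qed.

Lemma qmutinf_AA'_Y : qmutinf (rho_AA'_Y psi) = S_AA' + H_Y - S_B'_Y.
Proof.
pose f y (k k' : X * A') := \sum_b psi k.1 k.2 y b * (psi k'.1 k'.2 y b)^*.
rewrite (@qmutinf_ext _ _ _ _ (fun u v => (u.2 == v.2)%:R * f u.2 u.1 v.1)); last first.
  move=> -[k y] [k' y']; rewrite /rho_AA'_Y /f /=.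
  by have [<-|_] := eqVneq y y'; rewrite ?mul0r.
rewrite qmutinf_block_r.
have -> : vN_entropy (fun k k' => \sum_y f y k k') = S_AA'.
  by apply: vN_entropy_ext => k k'; rewrite /f pair_bigA.
have -> : \sum_y vN_entropy (f y) = S_B'_Y.
  apply: eq_bigr => y _.
  exact: (vN_entropy_pure_marginals (fun (k : X * A') b => psi k.1 k.2 y b)).
by [].
Qed.

Lemma qmutinf_X_YB' : qmutinf (rho_X_YB' psi) = H_X + S_B'_Y - S_A'_XY.
Proof.
pose h x y (b b' : B') := \sum_a psi x a y b * (psi x a y b')^*.
pose f x (m m' : Y * B') := (m.1 == m'.1)%:R * h x m.1 m.2 m'.2.
rewrite (@qmutinf_ext _ _ _ _ (fun u v => (u.1 == v.1)%:R * f u.1 u.2 v.2)); last first.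
  move=> -[x [y b]] [x' [y' b']]; rewrite /rho_X_YB' /f /h /= -mulrA.
  have [<-|_] := eqVneq x x'; last by rewrite !mul0r.
  by have [<-|_] := eqVneq y y'; rewrite ?mul0r.
rewrite qmutinf_block.
have -> : \sum_x eta_fun (complex.Re (\sum_m f x m m)) = H_X.
  apply: eq_bigr => x _; congr (eta_fun (complex.Re _)).
  by apply: eq_bigr => m _; rewrite /f eqxx mul1r.
have -> : vN_entropy (fun m m' => \sum_x f x m m') = S_B'_Y.
  rewrite /S_B'_Y -vN_entropy_block; apply: vN_entropy_ext => m m'.
  by rewrite /f /h -mulr_sumr pair_bigA.
have -> : \sum_x vN_entropy (f x) = S_A'_XY.
  apply: eq_bigr => x _; rewrite vN_entropy_block; apply: eq_bigr => y _; symmetry.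
  exact: (vN_entropy_pure_marginals (fun a b => psi x a y b)).
by [].
Qed.

Lemma qmutinf_XA'_Y : qmutinf (rho_XA'_Y psi) = S_A'_X + H_Y - S_A'_XY.
Proof.
pose h y x (a a' : A') := \sum_b psi x a y b * (psi x a' y b)^*.
pose f y (k k' : X * A') := (k.1 == k'.1)%:R * h y k.1 k.2 k'.2.
rewrite (@qmutinf_ext _ _ _ _ (fun u v => (u.2 == v.2)%:R * f u.2 u.1 v.1)); last first.
  move=> -[[x a] y] [[x' a'] y']; rewrite /rho_XA'_Y /f /h /= -mulrA mulrCA.
  have [<-|_] := eqVneq y y'; last by rewrite !mul0r.
  by have [<-|_] := eqVneq x x'; rewrite ?mul0r.
rewrite qmutinf_block_r.
have -> : vN_entropy (fun k k' => \sum_y f y k k') = S_A'_X.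
  rewrite /S_A'_X -vN_entropy_block; apply: vN_entropy_ext => k k'.
  by rewrite /f /h -mulr_sumr pair_bigA.
have -> : \sum_y eta_fun (complex.Re (\sum_k f y k k)) = H_Y.
  apply: eq_bigr => y _; congr (eta_fun (complex.Re _)).
  by apply: eq_bigr => k _; rewrite /f eqxx mul1r.
have -> : \sum_y vN_entropy (f y) = S_A'_XY.
  by rewrite /S_A'_XY exchange_big; apply: eq_bigr => y _; rewrite vN_entropy_block.
by [].
Qed.

Lemma qmutinf_leakage_difference :
  qmutinf (rho_X_BB' psi) - qmutinf (rho_AA'_Y psi)
  = qmutinf (rho_X_YB' psi) - qmutinf (rho_XA'_Y psi).
Proof.
rewrite qmutinf_X_BB' qmutinf_AA'_Y qmutinf_X_YB' qmutinf_XA'_Y pure_state_marginals.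
lra.
Qed.

End Embedding.

Theorem lemma2 (R : realType) (X A' Y B' : finType)
  (P : X * Y -> R) (psi : X -> A' -> Y -> B' -> R[i]) :
  is_distr P ->
  is_embedding P psi ->
  leakage P psi = qmutinf (rho_X_BB' psi) - mutinf P /\
  leakage P psi = qmutinf (rho_AA'_Y psi) - mutinf P.
Proof.
move=> _ [_ [I_X_YB' I_XA'_Y]].
have eq_leak : qmutinf (rho_X_BB' psi) = qmutinf (rho_AA'_Y psi).
  by apply/eqP; rewrite -subr_eq0 qmutinf_leakage_difference I_X_YB' I_XA'_Y subrr.
by rewrite /leakage eq_leak maxxx.
Qed.
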